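(* Let $d,N\ge1$ and $1\le r\le d^N$. Work in the quotient $V=\mathbb{R}^{d\times N}/L$, where $L$ is the lineality space of the normal fans below, and let $\overline{\mathsf{T}}$ be the image of $\mathsf{T}_{d,N}$ in $V$. Let $\Sigma^r$ denote the normal fan (in $V$) of the $r$-lineup polytope of the vertex set of $\Pi_{d,N}$, and let $\mathcal{T}^r=\{C\cap\overline{\mathsf{T}}:C\in\Sigma^r\}$ be its test fan. Then every ray (one-dimensional cone) of $\mathcal{T}^r$ is a ray of $\Sigma^{d^N}$, the normal fan of the sweep polytope $\mathcal{L}(\Pi_{d,N})$. (It need not be a ray of $\Sigma^r$.)
   Context: $\Pi_{d,N}=(\Delta_{d-1})^N\subset\mathbb{R}^{d\times N}$ with vertices $(\mathbf{e}_{i_1},\dots,\mathbf{e}_{i_N})$, $i_j\in[d]$. $\mathsf{T}_{d,N}=\{\mathbf{x}: 0\le x_{1,j}\le\dots\le x_{d,j}\ \forall j\in[N]\}$. For a point configuration $\mathbf{A}$ of size $n$, $1\le r\le n$, and weights $w_1>\dots>w_r>0$ with $\sum w_i=1$, the $r$-lineup polytope is $\operatorname{conv}\{\sum_{i=1}^r w_i\mathbf{v}_i:(\mathbf{v}_1,\dots,\mathbf{v}_r)\text{ an ordered list of distinct points of }\mathbf{A}\}$; its normal fan does not depend on the weights, and for $r=n$ it is the sweep polytope $\mathcal{L}(\mathbf{A})$. $L$ is the orthogonal complement of the affine hull of $\Pi_{d,N}$, spanned by the vectors $\sum_{i=1}^d\mathbf{e}_{i,j}$, $j\in[N]$; all these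 normal fans contain $L$ in every cone, and are considered as fans in $V$. The fans satisfy the refinement chain $\Sigma^1\succeq\Sigma^2\succeq\dots\succeq\Sigma^{d^N}$. *)

From HB Require Import structures.
From mathcomp Require Import all_boot all_order all_algebra.
Set Implicit Arguments. Unset Strict Implicit. Unset Printing Implicit Defensive.
Import Order.TTheory GRing.Theory Num.Theory.
Local Open Scope ring_scope.

Definition pset (T : Type) := T -> Prop.

Section Defs.
Variables (R : realFieldType) (d N : nat).
Local Notation M := 'M[R]_(d, N).

Definition pairing (c x : M) : R := \sum_(i < d) \sum_(j < N) c i j * x i j.

(* the vertex (e_{g 1}, ..., e_{g N}) of Pi_{d,N} = (Delta_{d-1})^N *)
Definition pi_vertex (g : {ffun 'I_N -> 'I_d}) : M :=
  \matrix_(i < d, j < N) (g j == i)%:R.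

Definition lineup_weights (r : nat) (w : 'I_r -> R) : Prop :=
  [/\ forall i j : 'I_r, (i < j)%N -> w j < w i,
      forall i, 0 < w i
    & \sum_(i < r) w i = 1].

Definition lineup_index (r : nat) : {set {ffun 'I_r -> {ffun 'I_N -> 'I_d}}} :=
  [set s : {ffun 'I_r -> {ffun 'I_N -> 'I_d}} | injectiveb s].

Definition lineup_point (r : nat) (w : 'I_r -> R)
  (s : {ffun 'I_r -> {ffun 'I_N -> 'I_d}}) : M :=
  \sum_(k < r) w k *: pi_vertex (s k).

Definition optimal (I : finType) (A : {set I}) (p : I -> M) (c : M) : {set I} :=
  [set i in A | [forall j in A, pairing c (p j) <= pairing c (p i)]].

(* Normal fan of P = conv { p i | i in A }: the normal cones
   N_F = { c | F subset of argmax_P c } of the nonempty faces F = argmax_P c0;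
   since max_P c = max_{i in A} c(p i), "F subset argmax_P c" is equivalent to
   "every point p i with i in optimal c0 is optimal for c", i.e.
   optimal c0 \subset optimal c. *)
Definition normal_fan (I : finType) (A : {set I}) (p : I -> M) : pset (pset M) :=
  fun C => exists c0 : M, C = (fun c => optimal A p c0 \subset optimal A p c).

Definition lineup_fan (r : nat) (w : 'I_r -> R) : pset (pset M) :=
  normal_fan (lineup_index r) (lineup_point w).

Definition lineality : pset M :=
  fun x => exists a : 'I_N -> R, forall i j, x i j = a j.

Definition Tdn : pset M :=
  fun x => forall j : 'I_N, forall i i' : 'I_d, (i <= i')%N ->
    0 <= x i j /\ x i j <= x i' j.

(* preimage in R^{d x N} of the image T-bar of T_{d,N} in V = R^{d x N}/L *)
Definition Tbar_lift : pset M :=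
  fun x => exists t l, Tdn t /\ lineality l /\ x = t + l.

Definition setI_p (A B : pset M) : pset M := fun x => A x /\ B x.

Definition span_dim (S : pset M) (k : nat) : Prop :=
  exists s : seq M, [/\ forall x, x \in s -> S x, free s, size s = k
                      & forall x, S x -> x \in <<s>>%VS].

End Defs.

From mathcomp Require Import all_boot all_order all_algebra.
From mathcomp Require Import reals boolp.
From mathcomp Require Import perm ring.
Set Implicit Arguments. Unset Strict Implicit. Unset Printing Implicit Defensive.
Import Order.TTheory GRing.Theory Num.Theory.
Local Open Scope ring_scope.

(* For c in R^{d x N} and a vertex g of Pi_{d,N} write c(g) = sum_j c_{g_j,j}
   for the pairing of c with g.  A list s of r distinct vertices maximizes
   c over the r-lineup polytope iff it is greedy: each s_a has maximal value
   c(s_a) among the vertices not listed before it (an exchange argument in one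
   direction, Abel summation in the other).  Hence the normal cones of all
   lineup polytopes only depend on the weak order c induces on vertices: if
   c refines the order of x, the optimal lists of x are optimal for c, and for
   the sweep polytope (r = d^N) the converse holds as well.

   Now let C be a cone of Sigma^r whose trace on T-bar is a ray: modulo the
   lineality space L it is spanned by some x in C cap T-bar outside L.  We
   show that C cap T-bar is exactly the normal cone of the sweep polytope at
   x.  A point c of that cone refines the order of x, hence lies in C (by the
   lineup statement above) and in T-bar (T-bar is cut out by comparisons of
   vertices differing in one column).  Conversely c in C cap T-bar is
   mu x + l with l in L, and mu >= 0 because x is not in L while both x and c
   have increasing columns; so c refines the order of x. *)

Section SummationInequalities.
Variable R : numDomainType.

Lemma abel_lower_bound (W A : nat -> R) n :
  (forall k, (k.+1 < n.+1)%N -> W k.+1 <= W k) ->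
  (forall m, (m < n.+1)%N -> 0 <= \sum_(k < m.+1) A k) ->
  W n * \sum_(k < n.+1) A k <= \sum_(k < n.+1) W k * A k.
Proof.
elim: n => [|n IH] Wdec Apos; first by rewrite !big_ord_recr !big_ord0 /= !add0r.
rewrite [in X in _ <= X]big_ord_recr /= [in X in _ * X]big_ord_recr /= mulrDr.
have IHn := IH (fun k hk => Wdec k (ltnW hk)) (fun m hm => Apos m (ltnW hm)).
have Wn : W n.+1 * \sum_(k < n.+1) A k <= W n * \sum_(k < n.+1) A k.
  by apply: ler_wpM2r; [exact: Apos | exact: Wdec].
by apply: lerD => //; exact: le_trans Wn IHn.
Qed.

Lemma abel_nonneg (W A : nat -> R) n :
  (forall k, (k.+1 < n)%N -> W k.+1 <= W k) ->
  (forall k, (k < n)%N -> 0 <= W k) ->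
  (forall m, (m < n)%N -> 0 <= \sum_(k < m.+1) A k) ->
  0 <= \sum_(k < n) W k * A k.
Proof.
case: n => [|n] Wdec Wpos Apos; first by rewrite big_ord0.
by apply: le_trans (abel_lower_bound Wdec Apos); apply: mulr_ge0; [exact: Wpos | exact: Apos].
Qed.

Lemma sum_top_set (T : finType) (F : T -> R) (S U : {set T}) : #|S| = #|U| ->
  (forall g h, g \notin S -> h \in S -> F g <= F h) ->
  \sum_(g in U) F g <= \sum_(g in S) F g.
Proof.
move=> cardSU Ftop.
rewrite (big_setID S) [in X in _ <= X](big_setID U) /= setIC lerD2l.
have cardD : #|U :\: S| = #|S :\: U| by rewrite !cardsD setIC cardSU.
set n := #|U :\: S| in cardD.
have scaled : n%:R * \sum_(g in U :\: S) F g <= n%:R * \sum_(g in S :\: U) F g.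
  rewrite {1}cardD !mulr_sumr.
  rewrite (eq_bigr (fun g => \sum_(h in S :\: U) F g)); last first.
    by move=> g _; rewrite sumr_const mulr_natl.
  rewrite [in X in _ <= X](eq_bigr (fun h => \sum_(g in U :\: S) F h)); last first.
    by move=> g _; rewrite /n sumr_const mulr_natl.
  rewrite [in X in _ <= X]exchange_big /=.
  apply: ler_sum => g; rewrite inE => /andP[gS _].
  by apply: ler_sum => h; rewrite inE => /andP[_ hS]; exact: Ftop.
have [n0|n_gt0] := posnP n; last by rewrite ler_pM2l ?ltr0n in scaled.
move: (n0); rewrite /n => /eqP; rewrite cards_eq0 => /eqP ->.
by move: n0; rewrite cardD => /eqP; rewrite cards_eq0 => /eqP ->; rewrite !big_set0.
Qed.

End SummationInequalities.

Section WeightedLists.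
Variables (R : realFieldType) (T : finType) (r : nat) (w : 'I_r -> R).
Hypothesis w_decr : forall i j : 'I_r, (i < j)%N -> w j < w i.
Hypothesis w_pos : forall i, 0 < w i.

Definition list_value (F : T -> R) (s : {ffun 'I_r -> T}) : R :=
  \sum_(k < r) w k * F (s k).

Definition optimal_list (F : T -> R) (s : {ffun 'I_r -> T}) : Prop :=
  injective s /\ forall t : {ffun 'I_r -> T}, injective t -> list_value F t <= list_value F s.

Definition greedy_list (F : T -> R) (s : {ffun 'I_r -> T}) : Prop :=
  forall (a : 'I_r) g, (forall k : 'I_r, (k <= a)%N -> s k != g) -> F g <= F (s a).

Definition swap_list (s : {ffun 'I_r -> T}) (a b : 'I_r) : {ffun 'I_r -> T} :=
  [ffun k => s (tperm a b k)].

Lemma swap_list_inj (s : {ffun 'I_r -> T}) (a b : 'I_r) :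
  injective s -> injective (swap_list s a b).
Proof. by move=> s_inj x y; rewrite !ffunE => /s_inj /perm_inj. Qed.

Lemma list_value_swap F s (a b : 'I_r) : a != b ->
  list_value F (swap_list s a b) = list_value F s - (w a - w b) * (F (s a) - F (s b)).
Proof.
move=> ab; rewrite /list_value (bigD1 a) //= (bigD1 b) 1?eq_sym //=.
rewrite [in RHS](bigD1 a) //= [in RHS](bigD1 b) 1?eq_sym //= !ffunE tpermL tpermR.
rewrite (eq_bigr (fun k => w k * F (s k))); first by ring.
by move=> k /andP[ka kb]; rewrite ffunE tpermD // eq_sym.
Qed.

Lemma list_value_replace F (s : {ffun 'I_r -> T}) (a : 'I_r) g :
  list_value F [ffun k => if k == a then g else s k] =
  list_value F s + w a * (F g - F (s a)).
Proof.
rewrite /list_value (bigD1 a) //= [in RHS](bigD1 a) //= ffunE eqxx.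
rewrite (eq_bigr (fun k => w k * F (s k))); first by ring.
by move=> k ka; rewrite ffunE (negbTE ka).
Qed.

(* Exchange argument: an optimal list is greedy.  A better unused element
   could replace s_a; a better later element s_b could be swapped with s_a. *)
Lemma greedy_of_optimal F s : optimal_list F s -> greedy_list F s.
Proof.
move=> [s_inj s_opt] a g g_new.
have [b /eqP sb | g_out] := pickP (fun k => s k == g).
  have ab : (a < b)%N by rewrite ltnNge; apply/negP => /g_new; rewrite sb eqxx.
  have := s_opt (swap_list s a b) (swap_list_inj s_inj).
  rewrite list_value_swap ?neq_ltn ?ab // -sb gerBl.
  by rewrite pmulr_rge0 ?subr_ge0 // subr_gt0 w_decr.
have t_inj : injective [ffun k => if k == a then g else s k].
  move=> x y; rewrite !ffunE.
  case: (x =P a) => [->|xa]; case: (y =P a) => [->|ya] //; last exact: s_inj.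
  - by move=> e; have := g_out y; rewrite e eqxx.
  - by move=> e; have := g_out x; rewrite e eqxx.
have := s_opt _ t_inj; rewrite list_value_replace gerDl.
by rewrite pmulr_rle0 ?w_pos // subr_le0.
Qed.

Lemma greedy_prefix_sum F (s t : {ffun 'I_r -> T}) (m : nat) :
  injective s -> injective t -> greedy_list F s ->
  \sum_(k : 'I_r | (k < m.+1)%N) F (t k) <= \sum_(k : 'I_r | (k < m.+1)%N) F (s k).
Proof.
move=> s_inj t_inj s_greedy.
set Am := [set k : 'I_r | (k < m.+1)%N].
have restrict u : \sum_(k : 'I_r | (k < m.+1)%N) F (u k) = \sum_(k in Am) F (u k).
  by apply: eq_bigl => k; rewrite inE.
rewrite !restrict -!(big_imset F (in2W t_inj)) -!(big_imset F (in2W s_inj)) /=.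
apply: sum_top_set; first by rewrite !card_imset.
move=> g h g_out /imsetP[k]; rewrite inE => km ->.
apply: s_greedy => k' k'k; apply: contraNneq g_out => <-.
by apply: imset_f; rewrite inE; exact: leq_ltn_trans km.
Qed.

(* Abel summation against the prefix-sum inequalities: greedy lists are
   optimal. *)
Lemma optimal_of_greedy F (s : {ffun 'I_r -> T}) :
  injective s -> greedy_list F s -> optimal_list F s.
Proof.
move=> s_inj s_greedy; split => // t t_inj.
pose W n := if (insub n : option 'I_r) is Some k then w k else 0.
pose A n := if (insub n : option 'I_r) is Some k then F (s k) - F (t k) else 0.
have insub_ord (k : 'I_r) : insub (val k) = Some k by exact: valK.
have insub_lt n (hn : (n < r)%N) : insub n = Some (Ordinal hn).
  by rewrite -[n]/(val (Ordinal hn)) insub_ord.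
have : 0 <= \sum_(k < r) W k * A k.
  apply: abel_nonneg.
  - move=> k hk; rewrite /W (insub_lt _ hk) (insub_lt _ (ltnW hk)).
    by apply/ltW/w_decr => /=.
  - by move=> k hk; rewrite /W (insub_lt _ hk); exact/ltW.
  move=> m hm; rewrite -(big_mkord xpredT) (big_nat_widen _ _ _ _ _ hm) big_mkord.
  rewrite (eq_bigr (fun k : 'I_r => F (s k) - F (t k))); last first.
    by move=> k _; rewrite /A insub_ord.
  by rewrite sumrB subr_ge0; exact: greedy_prefix_sum.
rewrite (eq_bigr (fun k : 'I_r => w k * (F (s k) - F (t k)))); last first.
  by move=> k _; rewrite /W /A insub_ord.
move=> value_gap; rewrite /list_value -subr_ge0 -sumrB.
by under eq_bigr => k _ do rewrite -mulrBr.
Qed.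

Lemma optimal_list_decr F s (p q : 'I_r) : optimal_list F s -> (p < q)%N ->
  F (s q) <= F (s p).
Proof.
move=> s_opt pq; have [s_inj _] := s_opt; apply: (greedy_of_optimal s_opt) => k kp.
by apply/eqP => /s_inj skq; move: kp; rewrite skq leqNgt pq.
Qed.

Lemma optimal_list_realizes F g g' : #|T| = r -> g != g' -> F g' <= F g ->
  exists s (p q : 'I_r), [/\ optimal_list F s, (p < q)%N, s p = g & s q = g'].
Proof.
move=> cardT gg' Fgg'.
pose s0 := [ffun k : 'I_r => enum_val (cast_ord (esym cardT) k)].
have s0_inj : s0 \in [pred s : {ffun 'I_r -> T} | injectiveb s].
  by apply/injectiveP => a b; rewrite !ffunE => /enum_val_inj /cast_ord_inj.
have [s1 /injectiveP s1_inj s1_max] := arg_maxP (list_value F) s0_inj.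
have s1_opt : optimal_list F s1.
  by split => // t /injectiveP t_inj; exact: s1_max.
have onto y : exists a, s1 a = y.
  have /codomP[a ->] : y \in codom s1.
    by apply: inj_card_onto => //; rewrite card_ord cardT.
  by exists a.
have [[a sa] [b sb]] := (onto g, onto g').
have ab : a != b by apply: contraNneq gg' => e; rewrite -sa -sb e.
have [lab | lba | eab] := ltngtP a b; last by move: ab; rewrite (val_inj eab) eqxx.
  by exists s1, a, b.
exists (swap_list s1 a b), b, a; split; rewrite ?ffunE ?tpermR ?tpermL //.
split; first exact: swap_list_inj.
move=> t t_inj; apply: le_trans (proj2 s1_opt t t_inj) _.
rewrite list_value_swap // sa sb lerDl oppr_ge0.
by rewrite mulr_le0_ge0 // ?subr_ge0 // subr_le0 ltW // w_decr.
Qed.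

End WeightedLists.

Section LineupFans.
Variables (R : realFieldType) (d N : nat).
Local Notation M := 'M[R]_(d, N).
Local Notation vertex := {ffun 'I_N -> 'I_d}.

Definition vertex_value (c : M) (g : vertex) : R := \sum_(j < N) c (g j) j.

Definition refines_order (x c : M) : Prop :=
  forall g g', vertex_value x g' <= vertex_value x g -> vertex_value c g' <= vertex_value c g.

Definition lineup_optimal r (w : 'I_r -> R) (c : M) :=
  optimal (lineup_index d N r) (lineup_point w) c.

Lemma pairing_pi_vertex (c : M) g : pairing c (@pi_vertex R d N g) = vertex_value c g.
Proof.
rewrite /pairing /vertex_value exchange_big /=; apply: eq_bigr => j _.
rewrite (bigD1 (g j)) //= !mxE eqxx mulr1 big1 ?addr0 // => i /negbTE ne.
by rewrite mxE eq_sym ne mulr0.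
Qed.

Lemma pairing_lineup_point r (w : 'I_r -> R) (c : M) s :
  pairing c (lineup_point w s) = list_value w (vertex_value c) s.
Proof.
rewrite /pairing /lineup_point /list_value.
under eq_bigr => i _ do under eq_bigr => j _ do rewrite summxE mulr_sumr.
rewrite exchange_big /=; under eq_bigr => i _ do rewrite exchange_big /=.
rewrite exchange_big /=; apply: eq_bigr => k _.
rewrite -pairing_pi_vertex /pairing exchange_big mulr_sumr; apply: eq_bigr => i _.
by rewrite mulr_sumr; apply: eq_bigr => j _; rewrite mxE; ring.
Qed.

Lemma lineup_optimalP r (w : 'I_r -> R) (c : M) s :
  s \in lineup_optimal w c <-> optimal_list w (vertex_value c) s.
Proof.
rewrite !inE; split.
  case/andP => /injectiveP s_inj /forallP s_max; split => // t t_inj.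
  have := s_max t; rewrite inE => /implyP; rewrite !pairing_lineup_point; apply.
  exact/injectiveP.
case=> s_inj s_max; apply/andP; split; first exact/injectiveP.
apply/forallP => t; rewrite inE; apply/implyP => /injectiveP t_inj.
by rewrite !pairing_lineup_point; exact: s_max.
Qed.

(* Refining the vertex order can only enlarge the optimal face: greedy lists
   for x stay greedy for c. *)
Lemma lineup_optimal_refines r (w : 'I_r -> R) (x c : M) : lineup_weights w ->
  refines_order x c -> lineup_optimal w x \subset lineup_optimal w c.
Proof.
case=> w_decr w_pos _ xc; apply/subsetP => s /lineup_optimalP s_opt.
apply/lineup_optimalP; apply: optimal_of_greedy (proj1 s_opt) _ => // a g g_new.
by apply: xc; exact: (greedy_of_optimal w_decr w_pos s_opt).
Qed.

Lemma sweep_optimal_refines (w : 'I_(d ^ N) -> R) (x c : M) : lineup_weights w ->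
  lineup_optimal w x \subset lineup_optimal w c -> refines_order x c.
Proof.
case=> w_decr w_pos _ sub g g' xgg'.
have [-> | gg'] := eqVneq g g'; first by [].
have card_vertex : #|vertex| = (d ^ N)%N by rewrite card_ffun !card_ord.
have [s [p [q [s_opt pq <- <-]]]] := optimal_list_realizes w_decr card_vertex gg' xgg'.
have /(subsetP sub)/lineup_optimalP s_optc : s \in lineup_optimal w x.
  exact/lineup_optimalP.
exact: (optimal_list_decr w_decr w_pos s_optc pq).
Qed.

Definition increasing_columns (x : M) : Prop :=
  forall j (i i' : 'I_d), (i <= i')%N -> x i j <= x i' j.

Lemma Tbar_lift_increasing (x : M) : Tbar_lift x -> increasing_columns x.
Proof.
move=> [t [l [Tt [[a la] ->]]]] j i i' ii'; rewrite !mxE !la lerD2r.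
by case: (Tt j i i' ii').
Qed.

(* Subtracting the first row puts an increasing matrix into T_{d,N}. *)
Lemma increasing_Tbar_lift (d_gt0 : (0 < d)%N) (x : M) : increasing_columns x -> Tbar_lift x.
Proof.
move=> x_incr; pose i0 := Ordinal d_gt0.
pose l := \matrix_(i < d, j < N) x i0 j.
exists (x - l), l; split; last split; last by rewrite subrK.
- move=> j i i' ii'; rewrite !mxE lerD2r subr_ge0.
  by split; apply: x_incr.
- by exists (fun j => x i0 j) => i j; rewrite mxE.
Qed.

Lemma lineality_Tbar_lift (l : M) : lineality l -> Tbar_lift l.
Proof.
move=> l_lin; exists 0, l; split; last by split; rewrite ?add0r.
by move=> j i i' _; rewrite !mxE.
Qed.

Lemma lineality_span (sL : seq M) : (forall y, y \in sL -> lineality y) ->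
  forall y, y \in <<sL>>%VS -> lineality y.
Proof.
move=> sL_lin y y_span; rewrite (@coord_span _ _ _ (in_tuple sL) y y_span).
apply: (big_ind (@lineality R d N)).
- by exists (fun _ => 0) => i j; rewrite mxE.
- by move=> u v [a ua] [b vb]; exists (fun j => a j + b j) => i j; rewrite mxE ua vb.
move=> i _; have [a ya] := sL_lin _ (mem_nth 0 (ltn_ord i)).
by exists (fun j => coord (in_tuple sL) i y * a j) => i' j; rewrite mxE ya.
Qed.

(* Points mu x + l with mu >= 0 and l in L refine the order of x, since
   vertex values of l are constant. *)
Lemma refines_ray mu (x l : M) : 0 <= mu -> lineality l -> refines_order x (mu *: x + l).
Proof.
move=> mu_ge0 [a la] g g' xgg'.
have value u : vertex_value (mu *: x + l) u = mu * vertex_value x u + \sum_(j < N) a j.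
  rewrite /vertex_value mulr_sumr -big_split /=.
  by apply: eq_bigr => j _; rewrite !mxE la.
by rewrite !value lerD2r ler_wpM2l.
Qed.

(* Refining the order of an increasing x preserves increasing columns: compare
   two vertices that differ only in column j. *)
Lemma refines_increasing (d_gt0 : (0 < d)%N) (x c : M) :
  increasing_columns x -> refines_order x c -> increasing_columns c.
Proof.
move=> x_incr xc j i i' ii'; pose i0 := Ordinal d_gt0.
pose vtx k := [ffun j' => if j' == j then k else i0] : vertex.
have value (y : M) k : vertex_value y (vtx k) = y k j + \sum_(j' < N | j' != j) y i0 j'.
  rewrite /vertex_value (bigD1 j) //= ffunE eqxx; congr (_ + _).
  by apply: eq_bigr => j' /negbTE j'j; rewrite ffunE j'j.
by have := xc (vtx i') (vtx i); rewrite !value !lerD2r; apply; exact: x_incr.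
Qed.

Lemma increasing_ray_coef (d_gt0 : (0 < d)%N) mu (x l : M) :
  increasing_columns x -> ~ lineality x -> lineality l ->
  increasing_columns (mu *: x + l) -> 0 <= mu.
Proof.
move=> x_incr x_notL [a la] c_incr; rewrite leNgt; apply/negP => mu_lt0.
apply: x_notL; pose i0 := Ordinal d_gt0.
exists (fun j => x i0 j) => i j; apply/eqP; rewrite eq_le andbC x_incr //=.
by have := c_incr j i0 i (leq0n _); rewrite !mxE !la lerD2r ler_nM2l.
Qed.

Lemma ray_generator (S : pset M) k : (forall l, lineality l -> S l) ->
  span_dim (@lineality R d N) k -> span_dim S k.+1 ->
  exists2 x, S x /\ ~ lineality x &
    forall y, S y -> exists mu l, lineality l /\ y = mu *: x + l.
Proof.
move=> LS [sL [sL_lin sL_free sL_size sL_span]] [s [s_S s_free s_size s_span]].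
have L_span := lineality_span sL_lin.
have sLs : (<<sL>> <= <<s>>)%VS.
  by apply/span_subvP => y /sL_lin /LS; exact: s_span.
have : ~~ all (fun y => y \in <<sL>>%VS) s.
  apply/negP => /allP s_sL; have : (<<s>> <= <<sL>>)%VS by exact/span_subvP.
  by move/dimvS; rewrite (eqP s_free) (eqP sL_free) s_size sL_size ltnn.
rewrite -has_predC => /hasP[x xs /= x_notL].
have xsL_free : free (x :: sL) by rewrite free_cons x_notL sL_free.
have xsL_sub : (<<x :: sL>> <= <<s>>)%VS.
  apply/span_subvP => y; rewrite inE => /orP[/eqP -> | ysL]; first exact: memv_span.
  by apply: (subvP sLs); exact: memv_span.
have xsL_span : <<x :: sL>>%VS = <<s>>%VS.
  apply/eqP; rewrite -(dimv_leqif_eq xsL_sub).2.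
  by rewrite (eqP s_free) (eqP xsL_free) /= s_size sL_size.
exists x; first by split; [exact: s_S | move/sL_span; rewrite (negbTE x_notL)].
move=> y /s_span; rewrite -xsL_span span_cons => /memv_addP[u /vlineP[mu ->] [l l_span ->]].
by exists mu, l; split => //; exact: L_span.
Qed.

End LineupFans.

Theorem proposition2p3 (R : realType) (d N r : nat)
    (w : 'I_r -> R) (w' : 'I_(d ^ N) -> R) :
  (1 <= d)%N -> (1 <= N)%N -> (1 <= r <= d ^ N)%N ->
  lineup_weights w -> lineup_weights w' ->
  forall C : pset 'M[R]_(d, N),
    lineup_fan w C ->
    (* C \cap T-bar is a one-dimensional cone of V = R^{dxN}/L *)
    (exists k, span_dim (@lineality R d N) k /\
               span_dim (setI_p C (@Tbar_lift R d N)) k.+1) ->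
    exists C' : pset 'M[R]_(d, N),
      lineup_fan w' C' /\ C' = setI_p C (@Tbar_lift R d N).
Proof.
move=> d_gt0 _ _ hw hw' C [c0 ->] [k [L_dim S_dim]].
set S := setI_p _ _ in S_dim.
have L_in_S (l : 'M[R]_(d, N)) : lineality l -> S l.
  move=> l_lin; split; last exact: lineality_Tbar_lift.
  have l_ray := lineup_optimal_refines hw (refines_ray (x := c0) (lexx 0) l_lin).
  by rewrite scale0r add0r in l_ray.
have [x [[x_C x_T] x_notL] x_spans] := ray_generator L_in_S L_dim S_dim.
have x_incr := Tbar_lift_increasing x_T.
exists (fun c => lineup_optimal w' x \subset lineup_optimal w' c); split; first by exists x.
apply/funext => c; apply/propext; split.
  move=> /(sweep_optimal_refines hw') xc; split.
    exact: subset_trans x_C (lineup_optimal_refines hw xc).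
  exact/(increasing_Tbar_lift d_gt0)/(refines_increasing d_gt0 x_incr xc).
move=> c_S; have [mu [l [l_lin c_eq]]] := x_spans c c_S.
have c_incr := Tbar_lift_increasing (proj2 c_S); rewrite c_eq in c_incr *.
have mu_ge0 := increasing_ray_coef d_gt0 x_incr x_notL l_lin c_incr.
exact: lineup_optimal_refines hw' (refines_ray mu_ge0 l_lin).
Qed.
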